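(* Let $(\mathcal{F},\mathcal{T}^X)$, $\mathcal{F}:\mathcal{T}^Y\to\mathcal{T}^Z$, be a dynamical system of (projective, holomorphic, stable) trees of spheres of degree $d$, dynamically approximable by a sequence $(f_n,y_n,z_n)_n$ of dynamically marked rational maps. Suppose that $v$ is an internal vertex of $T^X$ with $F(v)=v$ and $\deg(v)=d$. Then the sequence of conjugacy classes $[f_n]\in\mathrm{rat}_d$ converges to the conjugacy class $[f_v]\in\mathrm{rat}_d$.
   Context: $\mathrm{Rat}_d$ is the space of rational maps of degree $d$ and $\mathrm{rat}_d$ its quotient by conjugation by Möbius transformations; for $f_v:\mathbb{S}_v\to\mathbb{S}_v$, $[f_v]$ is the class of its expression in any projective chart. Trees: finite connected graphs without cycles (vertices, edges $2$-element subsets, $E_v$ edges at $v$); leaves have valence $1$, others internal ($IV$); stable: internal valence $\ge3$. For $e\in E_v$, $B_v(e)$ is the component of the tree minus $v$ containing $e$. A projective tree of spheres $\mathcal{T}^X$ marked by finite $X$ ($\ge3$ elements): tree $T^X$ with leaf set $X$ and, for internal $v$, a sphere $\mathbb{S}_v$ with projective structure and injection $i_v:E_v\to\mathbb{S}_v$; $Y_v$ etc. denote attaching point sets; $a_v(x)=i_v(e)$ for $x\in B_v(e)$. A holomorphic cover $\mathcal{F}:\mathcal{T}^Y\to\mathcal{T}^Z$: a map $F$ of trees sending vertices to vertices, edges $\{v,w\}$ to edges $\{F(v),F(w)\}$, $Y$ into $Z$, $IV^Y$ into $IV^Z$, with holomorphic branched coverings $f_v:\mathbb{S}_v\to\mathbb{S}_{F(v)}$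 that are coverings off $Y_v$, satisfy $f_v\circ i_v=i_{F(v)}\circ F$, and have equal local degrees at both ends of edges between internal vertices; $\deg(v)=\deg f_v$; the degree is $\sum_{v'\in F^{-1}(w)}\deg(v')$, independent of $w$. $T^X$ compatible with $T^Y$: $X\subseteq Y$, $IV^X\subseteq IV^Y$, and a vertex of $T^X$ separates three vertices of $T^X$ (puts them in distinct components of its complement) in $T^X$ iff in $T^Y$; $\mathcal{T}^X\triangleleft\mathcal{T}^Y$ if moreover internal spheres of $\mathcal{T}^X$ are the same projective spheres in $\mathcal{T}^Y$ and $a^X_v=a^Y_v|_X$. A dynamical system is $(\mathcal{F},\mathcal{T}^X)$ with $X\subseteq Y\cap Z$, $\mathcal{T}^X\triangleleft\mathcal{T}^Y$, $\mathcal{T}^X\triangleleft\mathcal{T}^Z$. A portrait of degree $d$: $\mathbf{F}=(F,\deg)$, $F:Y\to Z$, $\deg:Y\to\mathbb{N}\setminus\{0\}$, $\sum(\deg(a)-1)=2d-2$, $\sum_{a\in F^{-1}(b)}\deg(a)=d$. A rational map dynamically marked by $(\mathbf{F},X)$: $(f,y,z)$, $f\in\mathrm{Rat}_d$, $y:Y\to\hat{\mathbb{C}}$, $z:Z\to\hat{\mathbb{C}}$ injective, $f\circ y=z\circ F$, $\deg_{y(a)}f=\deg(a)$, $y|_X=z|_X$. Dynamically approximable: the $(f_n,y_n,z_n)$ are dynamically marked by $(\mathbf{F},X)$ where $\mathbf{F}$ is the portrait $(F|_Y,\text{local degrees at leaves})$ of $\mathcal{F}$, and for every $v\in IV^Y$,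 $w=F(v)$, there are projective isomorphisms $\phi^Y_{n,v}:\hat{\mathbb{C}}\to\mathbb{S}_v$, $\phi^Z_{n,w}:\hat{\mathbb{C}}\to\mathbb{S}_w$ with $\phi^Y_{n,v}\circ y_n\to a^Y_v$, $\phi^Z_{n,w}\circ z_n\to a^Z_w$, $\phi^Z_{n,w}\circ f_n\circ(\phi^Y_{n,v})^{-1}\to f_v$ locally uniformly on $\mathbb{S}_v\setminus Y_v$, and $\phi^Y_{n,v}=\phi^Z_{n,v}$ for all $v\in IV^X$. *)

From mathcomp Require Import all_boot all_order all_algebra.
Import Order.TTheory GRing.Theory Num.Theory.
From mathcomp Require Import reals.
From mathcomp Require Export complex.
Set Implicit Arguments.
Unset Strict Implicit.
Unset Printing Implicit Defensive.
Local Open Scope ring_scope.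

(* None stands for the point at infinity.                                   *)
Section Sphere.
Variable R : realType.

Definition Chat := option R[i].

Definition sqn (z : R[i]) : R := Re z ^+ 2 + Im z ^+ 2.

(* Square of the chordal distance (up to the constant factor 4);
   it induces the standard topology of the Riemann sphere. *)
Definition chord2 (z w : Chat) : R :=
  match z, w with
  | Some a, Some b => sqn (a - b) / ((1 + sqn a) * (1 + sqn b))
  | Some a, None | None, Some a => 1 / (1 + sqn a)
  | None, None => 0
  end.

Definition cvgC (xs : nat -> Chat) (x : Chat) : Prop :=
  forall eps : R, 0 < eps -> exists N, forall n, (N <= n)%N -> chord2 (xs n) x < eps.

Definition lu_cvg_off (A : Chat -> Prop) (gs : nat -> Chat -> Chat) (g : Chat -> Chat) :=
  forall z, ~ A z -> exists2 delta : R, 0 < delta &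
    forall eps : R, 0 < eps -> exists N, forall n, (N <= n)%N ->
      forall w, chord2 w z < delta -> chord2 (gs n w) (g w) < eps.

(* Rational maps.  A rational map of degree d is [P : Q] with P, Q of       *)
(* degree <= d, no common zero in P^1 (i.e. coprime and one of them has     *)
(* degree exactly d); a pair (P,Q) is a point of C^{2d+2} with nonzero      *)
(* resultant, i.e. a representative of a point of Rat_d in P^{2d+1}.        *)
Definition rpair := ({poly R[i]} * {poly R[i]})%type.

Definition rdeg (pq : rpair) : nat := (maxn (size pq.1) (size pq.2)).-1.

Definition isratpair (d : nat) (pq : rpair) : bool :=
  coprimep pq.1 pq.2 && (maxn (size pq.1) (size pq.2) == d.+1)%N.

Definition ratfun (pq : rpair) (z : Chat) : Chat :=
  match z with
  | Some a => if pq.2.[a] != 0 then Some (pq.1.[a] / pq.2.[a]) else None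
  | None => let d := rdeg pq in
            if pq.2`_d != 0 then Some (pq.1`_d / pq.2`_d) else None
  end.

(* local degree of the rational map pq at z: multiplicity of z as a
   solution of  f(zeta) = f(z)  (in the homogeneous sense at infinity) *)
Definition ldeg (pq : rpair) (z : Chat) : nat :=
  let g := match ratfun pq z with
           | Some w => pq.1 - w *: pq.2
           | None => pq.2
           end in
  match z with
  | Some a => mup a g
  | None => (rdeg pq - (size g).-1)%N
  end.

Definition isRat (d : nat) (f : Chat -> Chat) : Prop :=
  exists pq, isratpair d pq /\ f = ratfun pq.

Definition mobius (M : Chat -> Chat) : Prop := isRat 1 M.

Definition conjugate (h g : Chat -> Chat) : Prop :=
  exists M N, [/\ mobius M, mobius N, cancel M N, cancel N M &
                  h = M \o g \o N].

(* Open subsets of Rat_d (topology of Rat_d as an open subset of P^{2d+1}):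
   the set of coefficient vectors representing elements of U is open. *)
Definition rat_open (d : nat) (U : (Chat -> Chat) -> Prop) : Prop :=
  (forall g, U g -> isRat d g) /\
  (forall pq, isratpair d pq -> U (ratfun pq) ->
     exists2 eps : R, 0 < eps & forall pq', isratpair d pq' ->
       (forall i, (i <= d)%N -> sqn (pq'.1`_i - pq.1`_i) < eps /\
                                sqn (pq'.2`_i - pq.2`_i) < eps) ->
       U (ratfun pq')).

Definition saturated (U : (Chat -> Chat) -> Prop) : Prop :=
  forall g h, U g -> conjugate h g -> U h.

(* convergence of [f_n] to [g] in rat_d = Rat_d / PSL_2(C) with the
   quotient topology: open sets of rat_d = images of saturated open sets *)
Definition rat_cvg (d : nat) (fs : nat -> Chat -> Chat) (g : Chat -> Chat) : Prop :=
  forall U, rat_open d U -> saturated U -> U g ->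
    exists N, forall n, (N <= n)%N -> U (fs n).

End Sphere.

(* Trees of spheres.  All trees live in a common finite type U of vertices  *)
(* (so that the inclusions IV^X <= IV^Y etc. make sense); every internal    *)
(* sphere S_v is modelled as the projective sphere Chat itself, and the     *)
(* attaching map i_v : E_v -> S_v is  w |-> tatt v w  for the edge {v,w}.   *)
Record tos (U : finType) (R : realType) := Tos {
  tV : {set U};
  tE : rel U;
  tM : {set U};
  tatt : U -> U -> Chat R
}.

Section Trees.
Variables (U : finType) (R : realType).
Implicit Types (T : tos U R).

Definition valence T v : nat := #|[set w | tE T v w]|.

Definition restr T (S : {set U}) : rel U :=
  [rel x y | [&& tE T x y, x \in S & y \in S]].

Definition is_tree T : Prop :=
  [/\ symmetric (tE T), irreflexive (tE T),
      (forall x y, tE T x y -> (x \in tV T) && (y \in tV T)),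
      (forall x y, x \in tV T -> y \in tV T -> connect (tE T) x y) &
      (forall s : seq U, uniq s -> (3 <= size s)%N -> ~~ cycle (tE T) s)].

Definition internal T v : bool := (v \in tV T) && (v \notin tM T).

Definition is_tos T : Prop :=
  [/\ is_tree T,
      tM T = [set v in tV T | valence T v == 1%N],
      (3 <= #|tM T|)%N,
      (forall v, internal T v -> (3 <= valence T v)%N) &
      (forall v w w', internal T v -> tE T v w -> tE T v w' ->
          tatt T v w = tatt T v w' -> w = w')].

Definition in_branch T v w x : bool :=
  tE T v w && connect (restr T (tV T :\ v)) w x.

(* a_v(x) = a (as a relation: a_v(x) = i_v(e) for x in B_v(e)) *)
Definition attv T v x (a : Chat R) : Prop :=
  forall w, in_branch T v w x -> a = tatt T v w.

Definition Yv T v (z : Chat R) : Prop := exists2 w, tE T v w & z = tatt T v w.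

Definition separates T u a b c : bool :=
  let S := tV T :\ u in
  [&& a \in S, b \in S, c \in S,
      ~~ connect (restr T S) a b, ~~ connect (restr T S) a c &
      ~~ connect (restr T S) b c].

Definition compatible (TX TY : tos U R) : Prop :=
  [/\ tM TX \subset tM TY,
      (forall v, internal TX v -> internal TY v) &
      (forall u a b c, u \in tV TX -> a \in tV TX -> b \in tV TX -> c \in tV TX ->
          separates TX u a b c = separates TY u a b c)].

(* T^X <| T^Y  (the internal spheres are the same Chat) *)
Definition subtos (TX TY : tos U R) : Prop :=
  compatible TX TY /\
  forall v x w w', internal TX v -> x \in tM TX ->
    in_branch TX v w x -> in_branch TY v w' x -> tatt TX v w = tatt TY v w'.

(* Holomorphic covers F : T^Y -> T^Z.  cF is the map of vertices, and for   *)
(* an internal vertex v, cf v represents the rational map f_v.              *)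
Record tcover := TCover { cF : U -> U; cf : U -> rpair R }.

Definition is_cover (TY TZ : tos U R) (c : tcover) : Prop :=
  (((forall v, v \in tV TY -> cF c v \in tV TZ)) /\
  ((forall v w, tE TY v w -> tE TZ (cF c v) (cF c w))) /\
  ((forall x, x \in tM TY -> cF c x \in tM TZ)) /\
  ((forall v, internal TY v -> internal TZ (cF c v))) /\
  (
      (forall v, internal TY v -> ((1 <= rdeg (cf c v))%N /\ isratpair (rdeg (cf c v)) (cf c v)))) /\
  ((* f_v : S_v \ Y_v -> S_F(v) \ Z_F(v) is a covering (Z_w = Y_w of T^Z):
         no critical point off Y_v, and f_v^{-1}(Z_F(v)) is inside Y_v *)
      (forall v z, internal TY v ->
          (((1 < ldeg (cf c v) z)%N -> Yv TY v z) /\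
           (Yv TZ (cF c v) (ratfun (cf c v) z) -> Yv TY v z)))) /\
  (
      (forall v w, internal TY v -> tE TY v w ->
          ratfun (cf c v) (tatt TY v w) = tatt TZ (cF c v) (cF c w))) /\
  (
      (forall v w, internal TY v -> internal TY w -> tE TY v w ->
          ldeg (cf c v) (tatt TY v w) = ldeg (cf c w) (tatt TY w v)))).

Definition cover_degree (TY TZ : tos U R) (c : tcover) (d : nat) : Prop :=
  forall w, internal TZ w ->
    (\sum_(v in tV TY | internal TY v && (cF c v == w)) rdeg (cf c v))%N = d.

Definition dyn_system (d : nat) (TX TY TZ : tos U R) (c : tcover) : Prop :=
  ((is_tos TX) /\
  (is_tos TY) /\
  (is_tos TZ) /\
  (is_cover TY TZ c) /\
  (cover_degree TY TZ c d) /\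
  (tM TX \subset tM TY :&: tM TZ) /\
  (subtos TX TY) /\
  (subtos TX TZ)).

Definition leafdeg (TY : tos U R) (c : tcover) (a : U) : nat :=
  match [pick v | tE TY a v] with
  | Some v => ldeg (cf c v) (tatt TY v a)
  | None => 0%N
  end.

Definition is_portrait (d : nat) (TY TZ : tos U R) (c : tcover) : Prop :=
  [/\ (forall a, a \in tM TY -> (0 < leafdeg TY c a)%N),
      (\sum_(a in tM TY) (leafdeg TY c a - 1))%N = (d.*2 - 2)%N &
      (forall b, b \in tM TZ ->
         (\sum_(a in tM TY | cF c a == b) leafdeg TY c a)%N = d)].

Definition dyn_marked (d : nat) (TX TY TZ : tos U R) (c : tcover)
    (f : rpair R) (y z : U -> Chat R) : Prop :=
  ((isratpair d f) /\
  ({in tM TY &, injective y}) /\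
  ({in tM TZ &, injective z}) /\
  ((forall a, a \in tM TY -> ratfun f (y a) = z (cF c a))) /\
  ((forall a, a \in tM TY -> ldeg f (y a) = leafdeg TY c a)) /\
  (      (forall x, x \in tM TX -> y x = z x))).

Definition dyn_approx (d : nat) (TX TY TZ : tos U R) (c : tcover)
    (fn : nat -> rpair R) (yn zn : nat -> U -> Chat R) : Prop :=
  [/\ is_portrait d TY TZ c,
      (forall n, dyn_marked d TX TY TZ c (fn n) (yn n) (zn n)) &
      exists phiY psiY phiZ psiZ : nat -> U -> Chat R -> Chat R,
       [/\ (forall n v, internal TY v ->
              [/\ mobius (phiY n v), mobius (psiY n v),
                  cancel (phiY n v) (psiY n v) & cancel (psiY n v) (phiY n v)]),
           (forall n w, internal TZ w ->
              [/\ mobius (phiZ n w), mobius (psiZ n w),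
                  cancel (phiZ n w) (psiZ n w) & cancel (psiZ n w) (phiZ n w)]),
           (forall v, internal TY v ->
              [/\ (forall x a, x \in tM TY -> attv TY v x a ->
                     cvgC (fun n => phiY n v (yn n x)) a),
                  (forall x a, x \in tM TZ -> attv TZ (cF c v) x a ->
                     cvgC (fun n => phiZ n (cF c v) (zn n x)) a) &
                  lu_cvg_off (Yv TY v)
                    (fun n => phiZ n (cF c v) \o ratfun (fn n) \o psiY n v)
                    (ratfun (cf c v))]) &
           (forall n v, internal TX v -> phiY n v = phiZ n v)]].

End Trees.

(* Conjugating f_n by the Moebius charts phi_n := phi^Y_{n,v} = phi^Z_{n,v}
   (equal because v is a vertex of T^X fixed by F) gives maps g_n in the class
   of f_n that converge to f_v locally uniformly off the finite set Y_v.
   Since g_n and f_v have the same degree d, the values at 2d + 1 points of C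
   avoiding Y_v and the poles of f_v give linear systems for the coefficients
   of g_n whose limit has the coefficient line of f_v as kernel; Cramer's rule
   then makes suitable rescalings of the coefficients of g_n converge to those
   of f_v.  So g_n -> f_v in Rat_d, and [f_n] = [g_n] -> [f_v] in rat_d. *)

From mathcomp Require Import all_boot all_order all_algebra.
From mathcomp Require Import reals.
From mathcomp Require Import ring lra zify.
From Stdlib Require Import FunctionalExtensionality IndefiniteDescription.
Import Order.TTheory GRing.Theory Num.Theory.
Set Implicit Arguments.
Unset Strict Implicit.
Unset Printing Implicit Defensive.
Local Open Scope ring_scope.

Section ComplexConvergence.
Variable R : realType.
Local Notation K := R[i].
Implicit Types (x y : K) (u : nat -> K).

Lemma sqn_ge0 x : 0 <= sqn x.
Proof. by rewrite /sqn addr_ge0 // sqr_ge0. Qed.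

Lemma sqn0 : sqn (0 : K) = 0.
Proof. by rewrite /sqn /= expr0n /= addr0. Qed.

Lemma sqnN x : sqn (- x) = sqn x.
Proof. by case: x => a b; rewrite /sqn /=; ring. Qed.

Lemma sqnM x y : sqn (x * y) = sqn x * sqn y.
Proof. by case: x => a b; case: y => c e; rewrite /sqn /=; ring. Qed.

Lemma sqnD_le x y : sqn (x + y) <= 2 * (sqn x + sqn y).
Proof.
case: x => a b; case: y => c e; rewrite /sqn /=.
have := sqr_ge0 (a - c); have := sqr_ge0 (b - e); nra.
Qed.

Lemma sqn_eq0 x : (sqn x == 0) = (x == 0).
Proof.
apply/eqP/eqP => [|->]; last exact: sqn0.
case: x => a b; rewrite /sqn /= => h.
have -> : a = 0 by nra.
by have -> : b = 0 by nra.
Qed.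

Definition cvgCx u (l : K) := forall eps : R, 0 < eps ->
  exists N, forall n, (N <= n)%N -> sqn (u n - l) < eps.

Lemma eq_cvgCx u u' l : u =1 u' -> cvgCx u l -> cvgCx u' l.
Proof. by move=> e h eps /h [N hN]; exists N => n /hN; rewrite e. Qed.

Lemma cvgCx_cst l : cvgCx (fun _ => l) l.
Proof. by move=> e e0; exists 0%N => n _; rewrite subrr sqn0. Qed.

Lemma cvgCxN u l : cvgCx u l -> cvgCx (fun n => - u n) (- l).
Proof.
by move=> h e /h [N hN]; exists N => n /hN; rewrite -opprD sqnN.
Qed.

Lemma cvgCxD u l u' l' :
  cvgCx u l -> cvgCx u' l' -> cvgCx (fun n => u n + u' n) (l + l').
Proof.
move=> hu hu' e e0; have e4 : 0 < e / 4 by rewrite divr_gt0.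
have [N1 h1] := hu _ e4; have [N2 h2] := hu' _ e4.
exists (maxn N1 N2) => n; rewrite geq_max => /andP[n1 n2].
have := sqnD_le (u n - l) (u' n - l').
have -> : u n - l + (u' n - l') = u n + u' n - (l + l') by ring.
have := h1 _ n1; have := h2 _ n2; lra.
Qed.

Lemma cvgCx_bounded u l :
  cvgCx u l -> exists N, forall n, (N <= n)%N -> sqn (u n) <= 2 * (1 + sqn l).
Proof.
move=> h; have [N hN] := h 1 ltr01; exists N => n /hN.
have := sqnD_le (u n - l) l; rewrite subrK; have := sqn_ge0 l; lra.
Qed.

Lemma cvgCxM u l u' l' :
  cvgCx u l -> cvgCx u' l' -> cvgCx (fun n => u n * u' n) (l * l').
Proof.
move=> hu hu' e e0.
have [N0 h0] := cvgCx_bounded hu'.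
set B := 2 * (1 + sqn l').
have B0 : 0 < B by rewrite /B; have := sqn_ge0 l'; lra.
have Bl : 0 < 1 + sqn l by have := sqn_ge0 l; lra.
have e1 : 0 < e / (8 * B) by rewrite divr_gt0 // mulr_gt0.
have e2 : 0 < e / (8 * (1 + sqn l)) by rewrite divr_gt0 // mulr_gt0.
have [N1 h1] := hu _ e1; have [N2 h2] := hu' _ e2.
exists (maxn N0 (maxn N1 N2)) => n; rewrite !geq_max => /and3P[n0 n1 n2].
have -> : u n * u' n - l * l' = (u n - l) * u' n + l * (u' n - l') by ring.
have := sqnD_le ((u n - l) * u' n) (l * (u' n - l')); rewrite !sqnM.
have q1 : sqn (u n - l) * sqn (u' n) <= e / (8 * B) * B.
  by apply: ler_pM; rewrite ?sqn_ge0 ?h0 ?ltW ?h1.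
have q2 : sqn l * sqn (u' n - l') <= (1 + sqn l) * (e / (8 * (1 + sqn l))).
  by apply: ler_pM; rewrite ?sqn_ge0 ?ltW ?h2 //; lra.
have r1 : e / (8 * B) * B = e / 8 by field; lra.
have r2 : (1 + sqn l) * (e / (8 * (1 + sqn l))) = e / 8 by field; lra.
lra.
Qed.

Lemma cvgCx_big (op : K -> K -> K) (idx : K) (I : Type) (r : seq I) (P : pred I)
    (F : nat -> I -> K) (G : I -> K) :
  (forall u l u' l', cvgCx u l -> cvgCx u' l' ->
     cvgCx (fun n => op (u n) (u' n)) (op l l')) ->
  (forall i, P i -> cvgCx (F^~ i) (G i)) ->
  cvgCx (fun n => \big[op/idx]_(i <- r | P i) F n i) (\big[op/idx]_(i <- r | P i) G i).
Proof.
move=> hop hF; elim: r => [|i r IH].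
  by rewrite big_nil; apply: eq_cvgCx (cvgCx_cst _) => n; rewrite big_nil.
rewrite big_cons; case: ifP => Pi.
  by apply: eq_cvgCx (hop _ _ _ _ (hF i Pi) IH) => n; rewrite big_cons Pi.
by apply: eq_cvgCx IH => n; rewrite big_cons Pi.
Qed.

Definition cvgMx m n (A : nat -> 'M[K]_(m, n)) (B : 'M[K]_(m, n)) :=
  forall i j, cvgCx (fun k => A k i j) (B i j).

Lemma cvgMx_det m (A : nat -> 'M[K]_m) (B : 'M[K]_m) :
  cvgMx A B -> cvgCx (fun n => \det (A n)) (\det B).
Proof.
move=> h; apply: cvgCx_big => [|s _]; first exact: cvgCxD.
apply: cvgCxM; first exact: cvgCx_cst.
by apply: cvgCx_big => [|i _]; [exact: cvgCxM | exact: h].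
Qed.

Lemma cvgMx_mul m n p (A : nat -> 'M[K]_(m, n)) (B : nat -> 'M[K]_(n, p)) A0 B0 :
  cvgMx A A0 -> cvgMx B B0 -> cvgMx (fun k => A k *m B k) (A0 *m B0).
Proof.
move=> hA hB i j; rewrite mxE; apply: eq_cvgCx => [k|]; first by rewrite mxE.
by apply: cvgCx_big => [|l _]; [exact: cvgCxD | exact: cvgCxM].
Qed.

Lemma cvgMx_col' m p (A : nat -> 'M[K]_(m, p.+1)) A0 k :
  cvgMx A A0 -> cvgMx (fun n => col' k (A n)) (col' k A0).
Proof. by move=> h i j; rewrite mxE; apply: eq_cvgCx (h _ _) => n; rewrite mxE. Qed.

Lemma cvgMx_adj m (A : nat -> 'M[K]_m) B :
  cvgMx A B -> cvgMx (fun n => \adj (A n)) (\adj B).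
Proof.
move=> h i j; rewrite mxE; apply: eq_cvgCx => [n|]; first by rewrite mxE.
apply: cvgCxM; first exact: cvgCx_cst.
apply: cvgMx_det => k l; rewrite !mxE; apply: eq_cvgCx (h _ _) => n.
by rewrite !mxE.
Qed.

End ComplexConvergence.

Section KernelVector.
Variables (F : fieldType) (m : nat).
Implicit Types (M : 'M[F]_(m, m.+1)) (k : 'I_m.+1).

Definition col_ins k (c : F) (u : 'cV[F]_m) : 'cV[F]_m.+1 :=
  \col_i (if unlift k i is Some j then u j 0 else c).

Lemma col_ins_id k c u : col_ins k c u k 0 = c.
Proof. by rewrite mxE unlift_none. Qed.

Lemma col_ins_lift k c u j : col_ins k c u (lift k j) 0 = u j 0.
Proof. by rewrite mxE liftK. Qed.

Lemma col_insE k (x : 'cV[F]_m.+1) : x = col_ins k (x k 0) (row' k x).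
Proof.
apply/matrixP => i j; rewrite (ord1 j) mxE.
by case: unliftP => [l ->|->]; rewrite ?mxE.
Qed.

Lemma mul_col_ins M k c u : M *m col_ins k c u = c *: col k M + col' k M *m u.
Proof.
apply/matrixP => r j; rewrite (ord1 j) !mxE (bigD1_ord k) //= col_ins_id mulrC.
by congr (_ + _); apply: eq_bigr => i _; rewrite col_ins_lift !mxE.
Qed.

Lemma ker_col'_trivial M k (x : 'cV_m.+1) :
  \det (col' k M) != 0 -> M *m x = 0 -> x k 0 = 0 -> x = 0.
Proof.
move=> hd hx hk.
have ex : x = col_ins k 0 (row' k x) by rewrite {1}(col_insE k x) hk.
rewrite ex mul_col_ins scale0r add0r in hx.
have hu : col' k M \in unitmx by rewrite unitmxE unitfE.
have h0 : row' k x = 0 by rewrite -(mulKmx hu (row' k x)) hx mulmx0.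
rewrite ex h0; apply/matrixP => i j; rewrite !mxE.
by case: unlift => [l|]; rewrite ?mxE.
Qed.

(* Cramer's rule: a kernel vector whose entries are polynomial in those of [M]. *)
Definition kernel_vec M k : 'cV[F]_m.+1 :=
  col_ins k (\det (col' k M)) (\adj (col' k M) *m (- col k M)).

Lemma mul_kernel_vec M k : M *m kernel_vec M k = 0.
Proof.
by rewrite mul_col_ins mulmxA mul_mx_adj mul_scalar_mx scalerN addrN.
Qed.

Lemma kernel_vec_id M k : kernel_vec M k k 0 = \det (col' k M).
Proof. exact: col_ins_id. Qed.

Lemma det_col'_neq0 M (v : 'cV_m.+1) k : v k 0 != 0 ->
  (forall x, M *m x = 0 -> exists c, x = c *: v) -> \det (col' k M) != 0.
Proof.
move=> vk hker; apply/negP; rewrite -det_tr => /det0P [w w0 hw].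
have hw' : M *m col_ins k 0 w^T = 0.
  by rewrite mul_col_ins scale0r add0r -(trmxK (col' k M)) -trmx_mul hw trmx0.
have [c hc] := hker _ hw'.
have /eqP : c * v k 0 = 0 by have := col_ins_id k 0 w^T; rewrite hc mxE.
rewrite mulf_eq0 (negPf vk) orbF => /eqP c0.
move: hc; rewrite c0 scale0r => hz.
apply/negP: w0; rewrite negbK; apply/eqP/matrixP => i j.
by rewrite (ord1 i) !mxE; have := col_ins_lift k 0 w^T j; rewrite hz !mxE => <-.
Qed.

End KernelVector.

Section KernelLine.
Variables (R : realType) (m : nat).
Local Notation K := R[i].
Implicit Types (M : 'M[K]_(m, m.+1)) (k : 'I_m.+1).

Lemma cvgMx_kernel_vec (Mn : nat -> 'M[K]_(m, m.+1)) M k :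
  cvgMx Mn M -> cvgMx (fun n => kernel_vec (Mn n) k) (kernel_vec M k).
Proof.
move=> h i j; rewrite !mxE; apply: eq_cvgCx => [n|]; first by rewrite !mxE.
have hc := cvgMx_col' k h.
case: unlift => [l|]; last exact: cvgMx_det.
apply: cvgMx_mul; first exact: cvgMx_adj.
move=> r s; rewrite !mxE; apply: eq_cvgCx => [n|]; first by rewrite !mxE.
exact/cvgCxN/h.
Qed.

Lemma kernel_line_cvg (Mn : nat -> 'M[K]_(m, m.+1)) M (v : 'cV_m.+1)
    (xn : nat -> 'cV_m.+1) :
  cvgMx Mn M -> v != 0 -> (forall x, M *m x = 0 -> exists c, x = c *: v) ->
  (exists N, forall n, (N <= n)%N -> xn n != 0 /\ Mn n *m xn n = 0) ->
  forall eps, 0 < eps -> exists N, forall n, (N <= n)%N ->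
    exists2 c, c != 0 & forall i, sqn (c * xn n i 0 - v i 0) < eps.
Proof.
move=> hM v0 hker [N0 hx] eps e0.
have [k vk] : exists k, v k 0 != 0.
  apply/existsP; apply: contraR v0 => /existsPn h; apply/eqP/matrixP => i j.
  by rewrite (ord1 j) mxE; apply/eqP; have := h i; rewrite negbK.
have hD := det_col'_neq0 vk hker.
have [l hl] := hker _ (mul_kernel_vec M k).
have l0 : l != 0.
  by apply: contra hD => /eqP l0; rewrite -kernel_vec_id hl l0 scale0r mxE.
have hcv i : cvgCx (fun n => l^-1 * kernel_vec (Mn n) k i 0) (v i 0).
  have -> : v i 0 = l^-1 * kernel_vec M k i 0 by rewrite hl mxE mulKf.
  by apply: cvgCxM; [exact: cvgCx_cst | exact: cvgMx_kernel_vec].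
have [f hf] := fin_all_exists (fun i => hcv i eps e0).
have sD : 0 < sqn (\det (col' k M)) by rewrite lt_def sqn_eq0 hD sqn_ge0.
have [N1 hN1] := cvgMx_det (cvgMx_col' k hM) sD.
exists (maxn N0 (maxn N1 (\max_i f i))) => n; rewrite !geq_max => /and3P [n0 n1 n2].
have [xn0 hxn] := hx _ n0.
have Dn : \det (col' k (Mn n)) != 0.
  by apply/eqP => e; move: (hN1 _ n1); rewrite e sub0r sqnN ltxx.
have xk : xn n k 0 != 0.
  by apply: contra xn0 => /eqP e; apply/eqP; apply: (ker_col'_trivial Dn hxn e).
set z := kernel_vec (Mn n) k.
have hz : z = (z k 0 / xn n k 0) *: xn n.
  apply/eqP; rewrite -subr_eq0; apply/eqP; apply: (ker_col'_trivial Dn).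
    by rewrite mulmxBr mul_kernel_vec -scalemxAr hxn scaler0 subr0.
  by rewrite !mxE mulrVK ?unitfE // subrr.
exists (l^-1 * (z k 0 / xn n k 0)).
  by rewrite !mulf_neq0 ?invr_eq0 // /z kernel_vec_id.
move=> i; have hzi : z k 0 / xn n k 0 * xn n i 0 = z i 0.
  by rewrite [in RHS]hz [RHS]mxE.
rewrite -mulrA hzi.
by apply: hf; apply: leq_trans n2; apply: (leq_bigmax i).
Qed.

End KernelLine.

Section Homogenization.
Variable F : fieldType.
Implicit Types (p q S T : {poly F}).

Lemma coef_neq0_size p e : p`_e != 0 -> (e < size p)%N.
Proof. by apply: contraR; rewrite -leqNgt => h; rewrite nth_default. Qed.

Lemma size_mul_le p q m n : (size p <= m.+1)%N -> (size q <= n.+1)%N ->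
  (size (p * q)%R <= (m + n).+1)%N.
Proof.
by move=> hp hq; apply: leq_trans (size_polyMleq _ _) _; lia.
Qed.

Lemma size_exp_le p e i : (size p <= e.+1)%N -> (size (p ^+ i) <= (i * e).+1)%N.
Proof.
move=> hp; apply: leq_trans (size_poly_exp_leq _ _) _.
by rewrite ltnS mulnC leq_mul2l -subn1 leq_subLR add1n hp orbT.
Qed.

Lemma coef_mul_top p q m n : (size p <= m.+1)%N -> (size q <= n.+1)%N ->
  (p * q)`_(m + n) = p`_m * q`_n.
Proof.
move=> hp hq.
have [hp'|hp'] := ltnP (size p) m.+1.
  rewrite (nth_default 0 hp') mul0r nth_default //.
  by apply: leq_trans (size_polyMleq _ _) _; lia.
have [hq'|hq'] := ltnP (size q) n.+1.
  rewrite (nth_default 0 hq') mulr0 nth_default //.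
  by apply: leq_trans (size_polyMleq _ _) _; lia.
have sp : size p = m.+1 by apply/eqP; rewrite eqn_leq hp.
have sq : size q = n.+1 by apply/eqP; rewrite eqn_leq hq.
by have := mul_lead_coef p q; rewrite /lead_coef sp sq /= addnS.
Qed.

Lemma coef_exp_top p e i : (size p <= e.+1)%N -> (p ^+ i)`_(i * e) = p`_e ^+ i.
Proof.
move=> hp; elim: i => [|i IH]; first by rewrite !expr0 mul0n coefC.
by rewrite exprS mulSn coef_mul_top ?size_exp_le // IH exprS.
Qed.

Definition hhorner p (e : nat) (x y : F) : F :=
  \sum_(i < e.+1) p`_i * x ^+ i * y ^+ (e - i).

Definition hcomp p (e : nat) S T : {poly F} :=
  \sum_(i < e.+1) p`_i *: (S ^+ i * T ^+ (e - i)).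

Lemma horner_hcomp p e S T a : (hcomp p e S T).[a] = hhorner p e S.[a] T.[a].
Proof.
rewrite /hcomp /hhorner horner_sum; apply: eq_bigr => i _.
by rewrite hornerZ hornerM !horner_exp mulrA.
Qed.

Lemma hhornerE p e x y : (size p <= e.+1)%N -> y != 0 ->
  hhorner p e x y = y ^+ e * p.[x / y].
Proof.
move=> hp y0; rewrite (horner_coef_wide _ hp) mulr_sumr; apply: eq_bigr => i _.
have hi : (i <= e)%N by rewrite -ltnS.
have yi : y ^+ i != 0 by rewrite expf_neq0.
have -> : y ^+ e = y ^+ i * y ^+ (e - i) by rewrite -exprD subnKC.
by rewrite exprMn exprVn; field.
Qed.

Lemma hhorner_inf p e x : hhorner p e x 0 = p`_e * x ^+ e.
Proof.
rewrite /hhorner big_ord_recr /= subnn expr0 mulr1 big1 ?add0r // => i _.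
by rewrite expr0n subn_eq0 leqNgt ltn_ord /= mulr0.
Qed.

Lemma size_hcomp p e S T dd : (size S <= dd.+1)%N -> (size T <= dd.+1)%N ->
  (size (hcomp p e S T) <= (e * dd).+1)%N.
Proof.
move=> hS hT; apply: leq_trans (size_sum _ _ _) _; apply/bigmax_leqP => i _.
have hi : (i <= e)%N by rewrite -ltnS.
apply: leq_trans (size_scale_leq _ _) _.
apply: leq_trans (size_mul_le (size_exp_le i hS) (size_exp_le (e - i) hT)) _.
by rewrite -mulnDl subnKC.
Qed.

Lemma coef_hcomp p e S T dd : (size S <= dd.+1)%N -> (size T <= dd.+1)%N ->
  (hcomp p e S T)`_(e * dd) = hhorner p e S`_dd T`_dd.
Proof.
move=> hS hT; rewrite /hcomp coef_sum; apply: eq_bigr => i _.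
have hi : (i <= e)%N by rewrite -ltnS.
have -> : (e * dd = i * dd + (e - i) * dd)%N by rewrite -mulnDl subnKC.
rewrite coefZ coef_mul_top ?size_exp_le //.
by rewrite !coef_exp_top // mulrA.
Qed.

End Homogenization.

Section RationalPairs.
Variable R : realType.
Local Notation K := R[i].
Implicit Types (PQ ST : rpair R).

Lemma isratpairE e PQ : isratpair e PQ =
  [&& (size PQ.1 <= e.+1)%N, (size PQ.2 <= e.+1)%N, coprimep PQ.1 PQ.2 &
      (PQ.1`_e != 0) || (PQ.2`_e != 0)].
Proof.
case: PQ => P Q; rewrite /isratpair /=.
apply/andP/and4P => [[cp /eqP hm]|[h1 h2 cp hc]]; last first.
  split => //; rewrite eqn_leq geq_max h1 h2 leq_max.
  by case/orP: hc => /coef_neq0_size ->; rewrite ?orbT.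
have h1 : (size P <= e.+1)%N by rewrite -hm leq_maxl.
have h2 : (size Q <= e.+1)%N by rewrite -hm leq_maxr.
have top (p : {poly K}) : size p = e.+1 -> p`_e != 0.
  by move=> hp; rewrite -[e]/(e.+1.-1) -hp -lead_coefE lead_coef_eq0 -size_poly_eq0 hp.
split => //; have [hPQ|hQP] := leqP (size P) (size Q).
  by move: hm; rewrite (maxn_idPr hPQ) => /top ->; rewrite orbT.
by move: hm; rewrite (maxn_idPl (ltnW hQP)) => /top ->.
Qed.

Lemma rdeg_isratpair e PQ : isratpair e PQ -> rdeg PQ = e.
Proof. by case/andP => _ /eqP h; rewrite /rdeg h. Qed.

Definition hpoint (x y : K) : Chat R := if y != 0 then Some (x / y) else None.

Lemma hpointZ (c x y : K) : c != 0 -> hpoint (c * x) (c * y) = hpoint x y.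
Proof.
move=> c0; rewrite /hpoint mulf_eq0 (negPf c0) /=.
by case: ifP => // y0; congr Some; field; rewrite y0 c0.
Qed.

Lemma ratfun_Some PQ a : ratfun PQ (Some a) = hpoint PQ.1.[a] PQ.2.[a].
Proof. by []. Qed.

Lemma ratfun_None PQ : ratfun PQ None = hpoint PQ.1`_(rdeg PQ) PQ.2`_(rdeg PQ).
Proof. by []. Qed.

Lemma isratpair_horner_neq0 e PQ a : isratpair e PQ ->
  (PQ.1.[a] != 0) || (PQ.2.[a] != 0).
Proof.
rewrite isratpairE => /and4P [_ _ cp _].
have [h0|//] := eqVneq PQ.1.[a] 0.
by rewrite (coprimep_root cp) ?orbT // /root h0.
Qed.

Lemma hhorner_pair_neq0 e PQ x y : isratpair e PQ -> (x != 0) || (y != 0) ->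
  (hhorner PQ.1 e x y != 0) || (hhorner PQ.2 e x y != 0).
Proof.
rewrite isratpairE => /and4P [s1 s2 cp hc] hxy.
have [y0|y0] := eqVneq y 0.
  rewrite y0 !hhorner_inf; move: hxy; rewrite y0 eqxx orbF => x0.
  by rewrite !mulf_eq0 !expf_eq0 (negPf x0) !andbF !orbF.
rewrite !hhornerE // !mulf_eq0 !expf_eq0 (negPf y0) !andbF /=.
apply: contraT => /norP [/negPn h1 /negPn h2].
by have := coprimep_root cp h1; rewrite (eqP h2) eqxx.
Qed.

Lemma ratfun_hpoint e PQ x y : isratpair e PQ -> (x != 0) || (y != 0) ->
  ratfun PQ (hpoint x y) = hpoint (hhorner PQ.1 e x y) (hhorner PQ.2 e x y).
Proof.
move=> hr hxy; move: (hr); rewrite isratpairE => /and4P [s1 s2 _ _].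
rewrite /hpoint; have [y0|y0] := eqVneq y 0; rewrite ?eqxx ?y0 /=.
  rewrite (rdeg_isratpair hr) !hhorner_inf.
  move: hxy; rewrite y0 eqxx orbF => x0.
  have xe : x ^+ e != 0 by rewrite expf_neq0.
  rewrite mulf_eq0 (negPf xe) orbF; case: ifP => // q0; congr Some.
  by field; rewrite q0 xe.
rewrite ?y0 !hhornerE // mulf_eq0 expf_eq0 (negPf y0) andbF /=.
have ye : y ^+ e != 0 by rewrite expf_neq0.
by case: ifP => // q0; congr Some; field; rewrite q0 ye.
Qed.

Definition ratcomp PQ ST : rpair R :=
  (hcomp PQ.1 (rdeg PQ) ST.1 ST.2, hcomp PQ.2 (rdeg PQ) ST.1 ST.2).

Lemma isratpair_ratcomp e dd PQ ST : isratpair e PQ -> isratpair dd ST ->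
  isratpair (e * dd) (ratcomp PQ ST).
Proof.
move=> hPQ hST; move: (hST); rewrite isratpairE => /and4P [s1 s2 _ hc].
rewrite isratpairE /ratcomp /= (rdeg_isratpair hPQ) !size_hcomp //=.
rewrite !coef_hcomp // hhorner_pair_neq0 // andbT.
apply: Pdiv.ClosedField.root_coprimep => a; rewrite /root !horner_hcomp => h.
by have := hhorner_pair_neq0 hPQ (isratpair_horner_neq0 a hST); rewrite h.
Qed.

Lemma ratfun_ratcomp e dd PQ ST z : isratpair e PQ -> isratpair dd ST ->
  ratfun (ratcomp PQ ST) z = ratfun PQ (ratfun ST z).
Proof.
move=> hPQ hST; case: z => [a|].
  rewrite [ratfun ST _]ratfun_Some ratfun_Some /ratcomp /= !horner_hcomp.
  rewrite (rdeg_isratpair hPQ).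
  by rewrite (ratfun_hpoint hPQ (isratpair_horner_neq0 a hST)).
move: (hST); rewrite isratpairE => /and4P [s1 s2 _ hc].
rewrite !ratfun_None (rdeg_isratpair (isratpair_ratcomp hPQ hST)).
rewrite (rdeg_isratpair hST) /=.
by rewrite (rdeg_isratpair hPQ) !coef_hcomp // (ratfun_hpoint hPQ hc).
Qed.

Definition pairZ (c : K) PQ : rpair R := (c *: PQ.1, c *: PQ.2).

Lemma isratpairZ e c PQ : c != 0 -> isratpair e PQ = isratpair e (pairZ c PQ).
Proof.
move=> c0; rewrite !isratpairE /= !size_scale // coprimepZl // coprimepZr //.
by rewrite !coefZ !mulf_eq0 (negPf c0).
Qed.

Lemma ratfunZ c PQ : c != 0 -> ratfun (pairZ c PQ) =1 ratfun PQ.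
Proof.
move=> c0 [a|]; first by rewrite !ratfun_Some /= !hornerZ hpointZ.
by rewrite !ratfun_None /rdeg /= !size_scale // !coefZ hpointZ.
Qed.

End RationalPairs.

Section ChordalConvergence.
Variable R : realType.
Local Notation K := R[i].

Lemma chord2_refl (z : Chat R) : chord2 z z = 0.
Proof. by case: z => [a|] //=; rewrite subrr sqn0 mul0r. Qed.

Lemma chord2_Some_lt (x b : K) (delta : R) : 4 * delta * (1 + sqn b) <= 1 ->
  chord2 (Some x) (Some b) < delta -> sqn (x - b) < 4 * delta * (1 + sqn b) ^+ 2.
Proof.
rewrite /= -/(sqn (x - b)); set B := 1 + sqn b; set s := sqn (x - b) => hdB.
have B1 : 1 <= B by rewrite /B lerDl sqn_ge0.
have s0 : 0 <= s := sqn_ge0 _.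
have hx : sqn x <= 2 * (s + sqn b) by have := sqnD_le (x - b) b; rewrite subrK.
have hxB : 0 < (1 + sqn x) * B by rewrite mulr_gt0 //; have := sqn_ge0 x; lra.
rewrite ltr_pdivrMr // => hc.
(* [1 + sqn x <= 2 B + 2 s], so [s < delta B (2 B + 2 s)] with [2 delta B <= 1/2]. *)
have d0 : 0 < delta by nra.
have : s < delta * (2 * B * B + 2 * s * B).
  apply: lt_le_trans hc _; apply: ler_wpM2l; first exact: ltW.
  rewrite /B; have := sqn_ge0 b; nra.
rewrite expr2; nra.
Qed.

Lemma cvgC_Some (xs : nat -> Chat R) (b : K) : cvgC xs (Some b) ->
  (exists N, forall n, (N <= n)%N -> xs n != None) /\
  cvgCx (fun n => odflt 0 (xs n)) b.
Proof.
move=> h; set B := 1 + sqn b.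
have B1 : 1 <= B by rewrite /B lerDl sqn_ge0.
have near_b eps : 0 < eps -> exists N, forall n, (N <= n)%N ->
    exists2 x, xs n = Some x & sqn (x - b) < eps.
  (* [chord2 None (Some b) = 1 / B] exceeds [min eps 1 / (4 B^2)]. *)
  move=> e0; set e' := Num.min eps 1.
  have e'0 : 0 < e' by rewrite lt_min e0 ltr01.
  have e'1 : e' <= 1 by rewrite ge_min lexx orbT.
  have e'e : e' <= eps by rewrite ge_min lexx.
  have BB : 0 < 4 * B ^+ 2 by rewrite mulr_gt0 // exprn_gt0 //; lra.
  have [N hN] := h _ (divr_gt0 e'0 BB); exists N => n /hN.
  have hdB : 4 * (e' / (4 * B ^+ 2)) * B <= 1.
    have -> : 4 * (e' / (4 * B ^+ 2)) * B = e' / B by rewrite expr2; field; lra.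
    by rewrite ler_pdivrMr ?mul1r; lra.
  case: (xs n) => [x|] hc.
    exists x => //; apply: lt_le_trans (chord2_Some_lt hdB hc) _.
    rewrite -/B (_ : 4 * _ * _ = e') //; field.
    by apply/eqP; lra.
  by move: hc hdB; rewrite /= -/B ltr_pdivrMr; lra.
split; first by have [N hN] := near_b 1 ltr01; exists N => n /hN [x ->].
by move=> eps /near_b [N hN]; exists N => n /hN [x -> hx].
Qed.

Lemma lu_cvg_off_pointwise (A : Chat R -> Prop) gs g z :
  lu_cvg_off A gs g -> ~ A z -> cvgC (fun n => gs n z) (g z).
Proof.
move=> hlu /hlu [delta d0 hd] eps /hd [N hN]; exists N => n /hN; apply.
by rewrite chord2_refl.
Qed.

End ChordalConvergence.

Lemma exists_nonroots (F : numDomainType) (H : {poly F}) k : H != 0 ->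
  exists w : 'I_k -> F, injective w /\ forall j, H.[w j] != 0.
Proof.
move=> H0; set s := iota 0 (k + size H).
set good := [seq i <- s | H.[i%:R] != 0]; set bad := [seq i <- s | ~~ (H.[i%:R] != 0)].
have natr_inj : injective (fun i : nat => i%:R : F).
  by move=> i1 i2 /eqP; rewrite eqr_nat => /eqP.
have hbad : (size bad < size H)%N.
  rewrite -(size_map (fun i : nat => i%:R : F)); apply: max_poly_roots => //.
    apply/allP => x /mapP [l]; rewrite mem_filter negbK => /andP [/eqP h _] ->.
    by rewrite /root h.
  by rewrite map_inj_uniq ?filter_uniq ?iota_uniq.
have hgood : (k <= size good)%N.
  have := count_predC (fun i : nat => H.[i%:R] != 0) s.
  by rewrite size_iota -!size_filter -/good (_ : filter _ _ = bad) //; move: hbad; lia.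
have jgood (j : 'I_k) : (j < size good)%N by exact: leq_trans (ltn_ord _) hgood.
exists (fun j => (nth 0%N good j)%:R); split.
  move=> j1 j2 /natr_inj /eqP; rewrite nth_uniq ?filter_uniq ?iota_uniq //.
  by move/eqP/val_inj.
by move=> j; have := mem_nth 0%N (jgood j); rewrite mem_filter => /andP [].
Qed.

Section Interpolation.
Variables (R : realType) (d : nat).
Local Notation K := R[i].
Local Notation m := (d + d.+1)%N.
Implicit Types (S T : {poly K}) (PQ : rpair R).

Definition cvg_upto_scale (G : nat -> rpair R) PQ := forall eps : R, 0 < eps ->
  exists N, forall n, (N <= n)%N -> exists2 c : K, c != 0 & forall i, (i <= d)%N ->
    sqn (c * (G n).1`_i - PQ.1`_i) < eps /\ sqn (c * (G n).2`_i - PQ.2`_i) < eps.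


Definition coefv S T : 'cV[K]_(d.+1 + d.+1) :=
  col_mx (\col_(i < d.+1) S`_i) (\col_(i < d.+1) T`_i).

Lemma coefvP (x : 'cV[K]_(d.+1 + d.+1)) :
  exists S T, [/\ (size S <= d.+1)%N, (size T <= d.+1)%N & x = coefv S T].
Proof.
exists (\poly_(i < d.+1) x (lshift _ (inord i)) 0),
       (\poly_(i < d.+1) x (rshift _ (inord i)) 0).
split; rewrite ?size_poly // -[LHS]vsubmxK; congr col_mx; apply/matrixP => i j;
by rewrite (ord1 j) !mxE coef_poly ltn_ord inord_val.
Qed.

Lemma coefvZ (c : K) S T : coefv (c *: S) (c *: T) = c *: coefv S T.
Proof.
by rewrite /coefv scale_col_mx; congr col_mx; apply/matrixP => i j; rewrite !mxE coefZ.
Qed.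

Lemma coefv_lshift S T (i : 'I_d.+1) : coefv S T (lshift _ i) 0 = S`_i.
Proof. by rewrite col_mxEu mxE. Qed.

Lemma coefv_rshift S T (i : 'I_d.+1) : coefv S T (rshift _ i) 0 = T`_i.
Proof. by rewrite col_mxEd mxE. Qed.

Lemma coefv_neq0 PQ : isratpair d PQ -> coefv PQ.1 PQ.2 != 0.
Proof.
rewrite isratpairE => /and4P [_ _ _ hc]; apply/negP => /eqP h0.
have := coefv_lshift PQ.1 PQ.2 ord_max; have := coefv_rshift PQ.1 PQ.2 ord_max.
by rewrite h0 !mxE /= => h1 h2; move: hc; rewrite -h1 -h2 eqxx.
Qed.

Definition interp_mx (w b : 'I_m -> K) : 'M[K]_(m, d.+1 + d.+1) :=
  row_mx (\matrix_(j < m, i < d.+1) w j ^+ i)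
         (- \matrix_(j < m, i < d.+1) (b j * w j ^+ i)).

Lemma interp_mx_coefv w b S T j : (size S <= d.+1)%N -> (size T <= d.+1)%N ->
  (interp_mx w b *m coefv S T) j 0 = S.[w j] - b j * T.[w j].
Proof.
move=> hS hT; rewrite /interp_mx /coefv mul_row_col mulNmx !mxE.
rewrite (horner_coef_wide _ hS) (horner_coef_wide _ hT) mulr_sumr.
by congr (_ - _); apply: eq_bigr => i _; rewrite !mxE; ring.
Qed.

Lemma cvgMx_interp_mx w (bn : nat -> 'I_m -> K) b :
  (forall j, cvgCx (bn^~ j) (b j)) ->
  cvgMx (fun n => interp_mx w (bn n)) (interp_mx w b).
Proof.
move=> hb r j; rewrite /interp_mx -(splitK j); case: (split j) => l /=.
  by rewrite row_mxEl; apply: eq_cvgCx (cvgCx_cst _) => n; rewrite row_mxEl !mxE.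
rewrite row_mxEr !mxE; apply: eq_cvgCx => [n|]; first by rewrite row_mxEr !mxE.
by apply/cvgCxN/cvgCxM; [exact: hb | exact: cvgCx_cst].
Qed.

(* A degree-[d] map is determined by its values at [2d + 1] points: the
   difference of cross products vanishes there but has degree at most [2d]. *)
Lemma interp_mx_kernel (w : 'I_m -> K) PQ : injective w -> isratpair d PQ ->
  (forall j, PQ.2.[w j] != 0) ->
  forall x, interp_mx w (fun j => PQ.1.[w j] / PQ.2.[w j]) *m x = 0 ->
  exists c, x = c *: coefv PQ.1 PQ.2.
Proof.
case: PQ => P Q winj hr hQ x hx /=; move: (hr); rewrite isratpairE /=.
case/and4P => sP sQ cp hc; have [S [T [sS sT ex]]] := coefvP x.
have hj j : S.[w j] = P.[w j] / Q.[w j] * T.[w j].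
  have := interp_mx_coefv w (fun j => P.[w j] / Q.[w j]) j sS sT.
  by rewrite -ex hx mxE => /esym/eqP; rewrite subr_eq0 => /eqP.
have Q0 : Q != 0 by apply: contra_neq (hQ (rshift d ord0)) => ->; rewrite horner0.
have hPTSQ : P * T = S * Q.
  apply/eqP; rewrite -subr_eq0; apply/eqP; apply: contraTeq isT => D0.
  have hroots : all (root (P * T - S * Q)) [seq w j | j <- enum 'I_m].
    apply/allP => z /mapP [j _ ->]; rewrite /root !hornerE hj.
    by apply/eqP; field.
  have hsize : (size (P * T - S * Q)%R <= m)%N.
    apply: leq_trans (size_polyD _ _) _.
    by rewrite size_polyN addnS geq_max !size_mul_le.
  have := max_poly_roots D0 hroots; rewrite map_inj_uniq ?enum_uniq //.
  by rewrite size_map size_enum_ord ltnNge hsize => /(_ isT).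
have dv : Q %| T.
  have cpQP : coprimep Q P by rewrite coprimep_sym.
  by rewrite -(Gauss_dvdpr _ cpQP) hPTSQ dvdp_mull.
set k := T %/ Q; have hT : T = k * Q by rewrite divpK.
have hS : S = P * k by apply: (mulIf Q0); rewrite -hPTSQ hT; ring.
have sk : (size k <= 1)%N.
  rewrite leqNgt; apply/negP => sk.
  have k0 : k != 0 by rewrite -size_poly_gt0 (ltn_trans _ sk).
  case/orP: hc => /coef_neq0_size hc.
    have P0 : P != 0 by rewrite -size_poly_gt0 (leq_ltn_trans _ hc).
    by move: sS hc sk; rewrite hS size_mul //; move: (size P) (size k) => a b; lia.
  by move: sT hc sk; rewrite hT size_mul //; move: (size k) (size Q) => a b; lia.
exists k`_0; rewrite ex -coefvZ hS hT (size1_polyC sk).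
by rewrite mul_polyC mulrC mul_polyC coefC.
Qed.

Lemma isratpair_den_neq0 PQ : (0 < d)%N -> isratpair d PQ -> PQ.2 != 0.
Proof.
move=> d0 /andP [cp /eqP hm]; apply/eqP => Q0.
move: cp hm; rewrite Q0 coprimep0 => /eqp_size; rewrite size_poly1 => ->.
by rewrite size_poly0 => -[] d00; move: d0; rewrite -d00.
Qed.

Lemma interpolation_nodes PQ (L : seq (Chat R)) : PQ.2 != 0 ->
  exists w : 'I_m -> K,
    [/\ injective w, forall j, PQ.2.[w j] != 0 & forall j, Some (w j) \notin L].
Proof.
move=> Q0; set H := PQ.2 * \prod_(z <- L) (if z is Some a then 'X - a%:P else 1).
have H0 : H != 0.
  rewrite mulf_neq0 // prodf_seq_neq0; apply/allP => -[a|] _ //=.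
    by rewrite polyXsubC_eq0.
  exact: oner_neq0.
have [w [winj hw]] := exists_nonroots m H0.
exists w; split => // j; move: (hw j); rewrite /H hornerM mulf_eq0 negb_or.
  by case/andP.
case/andP => _; apply: contraNN => hin; rewrite horner_prod.
rewrite prodf_seq_eq0; apply/hasP; exists (Some (w j)) => //=.
by rewrite hornerXsubC subrr.
Qed.

(* Interpolate at [2d + 1] points avoiding [L] and the poles of [PQ]. *)
Lemma rescaled_coef_cvg PQ (G : nat -> rpair R) (L : seq (Chat R)) : (0 < d)%N ->
  isratpair d PQ -> (forall n, isratpair d (G n)) ->
  (forall a : K, Some a \notin L ->
     cvgC (fun n => ratfun (G n) (Some a)) (ratfun PQ (Some a))) ->
  cvg_upto_scale G PQ.
Proof.
move=> d0 hPQ hG hcv eps e0.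
have [w [winj hwQ hwL]] := interpolation_nodes L (isratpair_den_neq0 d0 hPQ).
set b := fun j => PQ.1.[w j] / PQ.2.[w j].
set bn := fun n j => odflt 0 (ratfun (G n) (Some (w j))).
have hcvj j : (exists N, forall n, (N <= n)%N -> ratfun (G n) (Some (w j)) != None) /\
    cvgCx (bn^~ j) (b j).
  have hb : ratfun PQ (Some (w j)) = Some (b j) by rewrite /= (hwQ j).
  by apply: cvgC_Some; rewrite -hb; apply: hcv.
have [fN hfN] := fin_all_exists (fun j => proj1 (hcvj j)).
have hker : exists N, forall n, (N <= n)%N -> coefv (G n).1 (G n).2 != 0 /\
    interp_mx w (bn n) *m coefv (G n).1 (G n).2 = 0.
  exists (\max_j fN j) => n hn; split; first exact: coefv_neq0.
  move: (hG n); rewrite isratpairE => /and4P [s1 s2 _ _].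
  apply/matrixP => j k; rewrite (ord1 k) interp_mx_coefv // mxE.
  have := hfN j n (leq_trans (leq_bigmax j) hn).
  by rewrite /bn /=; case: ifP => // q0 _ /=; rewrite divfK ?subrr.
have [N hN] := kernel_line_cvg (cvgMx_interp_mx w (fun j => proj2 (hcvj j)))
  (coefv_neq0 hPQ) (interp_mx_kernel winj hPQ hwQ) hker e0.
exists N => n /hN [c c0 hc]; exists c => // i hi.
have := hc (lshift d.+1 (Ordinal (hi : (i < d.+1)%N))).
have := hc (rshift d.+1 (Ordinal (hi : (i < d.+1)%N))).
by rewrite !coefv_lshift !coefv_rshift.
Qed.

End Interpolation.

Section Conjugacy.
Variable R : realType.
Local Notation K := R[i].
Implicit Types (f g h : Chat R -> Chat R) (PQ : rpair R).

Lemma conjugateC h g : conjugate h g -> conjugate g h.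
Proof.
case=> M [N [hM hN MK NK ->]]; exists N, M; split => //.
by apply: functional_extensionality => z /=; rewrite !MK.
Qed.

Lemma conjugate_isratpair d M N PQ : mobius M -> mobius N -> isratpair d PQ ->
  exists2 ST, isratpair d ST & ratfun ST = M \o ratfun PQ \o N.
Proof.
move=> [A [hA ->]] [B [hB ->]] hPQ.
have hPQB := isratpair_ratcomp hPQ hB; rewrite muln1 in hPQB.
exists (ratcomp A (ratcomp PQ B)); first by rewrite -[d]mul1n isratpair_ratcomp.
apply: functional_extensionality => z /=.
by rewrite (ratfun_ratcomp _ hA hPQB) (ratfun_ratcomp _ hPQ hB).
Qed.

Lemma rat_cvg_upto_scale d (fs : nat -> Chat R -> Chat R) (G : nat -> rpair R) PQ :
  isratpair d PQ -> (forall n, isratpair d (G n)) -> cvg_upto_scale d G PQ ->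
  (forall n, conjugate (fs n) (ratfun (G n))) -> rat_cvg d fs (ratfun PQ).
Proof.
move=> hPQ hG hcv hconj V [_ hVopen] hsat hV.
have [eps e0 heps] := hVopen _ hPQ hV; have [N hN] := hcv _ e0.
exists N => n /hN [c c0 hc]; apply: hsat (hconj n).
rewrite -(functional_extensionality _ _ (ratfunZ (G n) c0)).
by apply: heps => [|i /hc]; rewrite -?isratpairZ //= !coefZ.
Qed.

End Conjugacy.

Lemma Yv_mem_tatt (U : finType) (R : realType) (T : tos U R) v z :
  Yv T v z -> z \in [seq tatt T v w | w <- enum U].
Proof. by case=> w _ ->; apply: map_f; rewrite mem_enum. Qed.

Unset Implicit Arguments.

Theorem corollary4p15 (U : finType) (R : realType) (d : nat)
    (TX TY TZ : tos U R) (c : tcover U R)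
    (fn : nat -> rpair R) (yn zn : nat -> U -> Chat R) (v : U) :
  dyn_system d TX TY TZ c ->
  dyn_approx d TX TY TZ c fn yn zn ->
  internal TX v -> cF c v = v -> rdeg (cf c v) = d ->
  rat_cvg d (fun n => ratfun (fn n)) (ratfun (cf c v)).
Proof.
move=> [_ [_ [_ [[_ [_ [_ [_ [hrat _]]]]] [_ [_ [[[_ hXY _] _] _]]]]]]].
move=> [_ hmark [phiY [psiY [phiZ [psiZ [hY _ hconv hXZ]]]]]] hvX hFv hdeg.
have hvY := hXY _ hvX.
have [d0 hf] := hrat v hvY; rewrite hdeg in d0 hf.
have hfn n : isratpair d (fn n) by case: (hmark n).
have /functional_choice [G hG] : forall n, exists ST : rpair R, isratpair d ST /\
    ratfun ST = phiY n v \o ratfun (fn n) \o psiY n v.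
  move=> n; have [hphi hpsi _ _] := hY n v hvY.
  by have [ST] := conjugate_isratpair hphi hpsi (hfn n); exists ST.
apply: (rat_cvg_upto_scale hf (fun n => proj1 (hG n))); last first.
  move=> n; apply: conjugateC; have [? ? ? ?] := hY n v hvY.
  by exists (phiY n v), (psiY n v); rewrite (proj2 (hG n)).
apply: (rescaled_coef_cvg (L := [seq tatt TY v w | w <- enum U]) d0 hf
  (fun n => proj1 (hG n))) => a haL.
have [_ _ hlu] := hconv v hvY; rewrite hFv in hlu.
have nY : ~ Yv TY v (Some a) by move/Yv_mem_tatt; apply/negP.
have := lu_cvg_off_pointwise hlu nY; congr cvgC.
by apply: functional_extensionality => n; rewrite (proj2 (hG n)) hXZ.
Qed.
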